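(* Let $a<b$, $k>0$, $\lambda\in(0,\pi/2]$ and $f\in C^3([a,b])$. For every sequence $\{\epsilon_n\}_{n=0}^\infty$ with $\epsilon_n\in J_n$ for all $n$, and for every $n$, the Neumann problem $$\epsilon_n y''+ky=f(t),\quad t\in[a,b],\qquad y'(a)=0,\ y'(b)=0$$ has a unique solution $y_{\epsilon_n}$, and $y_{\epsilon_n}\to u$ uniformly on $[a,b]$ as $n\to\infty$, where $u(t)=f(t)/k$ is the solution of the reduced equation $ky=f(t)$. More precisely, there is a constant $C$ (depending only on $f,k,\lambda,a,b$, not on $n$) such that $$\sup_{t\in[a,b]}\Big|y_{\epsilon_n}(t)-\frac{f(t)}{k}\Big|\le C\sqrt{\epsilon_n}\quad\text{for all } n,$$ i.e. $y_{\epsilon_n}(t)=f(t)/k+\mathcal O(\sqrt{\epsilon_n})$ uniformly on $[a,b]$.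
   Context: For a fixed constant $\lambda\in(0,\pi/2]$ and $n=0,1,2,\dots$ define the closed intervals $$J_n=\left[\,k\left(\frac{b-a}{(n+1)\pi-\lambda}\right)^2,\ k\left(\frac{b-a}{n\pi+\lambda}\right)^2\,\right].$$ Note that $\epsilon\in J_n$ iff $\sqrt{k/\epsilon}\,(b-a)\in[n\pi+\lambda,(n+1)\pi-\lambda]$. *)

From Stdlib Require Import Reals Lra.
Open Scope R_scope.

Definition deriv_on (a b : R) (g g' : R -> R) : Prop :=
  forall x, a <= x <= b ->
  forall e, 0 < e -> exists d, 0 < d /\
    forall h, h <> 0 -> Rabs h < d -> a <= x + h <= b ->
      Rabs ((g (x + h) - g x) / h - g' x) < e.

Definition cont_on (a b : R) (g : R -> R) : Prop :=
  forall x, a <= x <= b ->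
  forall e, 0 < e -> exists d, 0 < d /\
    forall z, a <= z <= b -> Rabs (z - x) < d -> Rabs (g z - g x) < e.

Definition C3_on (a b : R) (f : R -> R) : Prop :=
  exists f1 f2 f3 : R -> R,
    deriv_on a b f f1 /\ deriv_on a b f1 f2 /\ deriv_on a b f2 f3 /\
    cont_on a b f3.

Definition neumann_sol (a b eps k : R) (f y : R -> R) : Prop :=
  exists y1 y2 : R -> R,
    deriv_on a b y y1 /\ deriv_on a b y1 y2 /\
    (forall t, a <= t <= b -> eps * y2 t + k * y t = f t) /\
    y1 a = 0 /\ y1 b = 0.

Definition in_J (a b k lam : R) (n : nat) (eps : R) : Prop :=
  k * ((b - a) / ((INR n + 1) * PI - lam)) ^ 2 <= eps <=
  k * ((b - a) / (INR n * PI + lam)) ^ 2.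

From Stdlib Require Import Reals Lra.
From Coquelicot Require Import Coquelicot.
Open Scope R_scope.

(* Put w := sqrt (k/eps) and let y solve the problem. For any C^2 function g,
   Z := y - g satisfies Z'' + w^2 Z = r with r := (f - k g - eps g'') / eps.
   The phase energies P_c(s) = Z'(s) cos (c (s - s0)) + c Z(s) sin (c (s - s0)),
   c = +-w, have P_c' = r cos (c (s - s0)), so P_w (started at a) and P_(-w)
   (started at b) stay within (b - a) sup |r| of Z'(a) and Z'(b); the identity
     w Z(t) sin (w (b - a)) = cos (w (b - t)) P_w(t) - cos (w (t - a)) P_(-w)(t)
   then bounds w |Z(t)| |sin (w (b - a))|.  With g = f/k the Neumann conditions
   give Z'(a), Z'(b) = -f'(a)/k, -f'(b)/k and r = -f''/k; for eps in J_n the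
   phase w (b - a) stays at distance >= lam from the multiples of pi, so
   |sin (w (b - a))| >= sin lam and |y - f/k| = O(1/w) = O(sqrt eps).  With g a
   second solution, r = 0 gives uniqueness, and existence follows from
   variation of constants since sin (w (b - a)) <> 0. *)

(* Composing with [clamp a b] extends a function on [a,b] by constants, which
   turns [cont_on]/[deriv_on] into the pointwise notions of the real library. *)
Definition clamp (a b x : R) : R := Rmax a (Rmin b x).

Lemma clamp_in a b x : a <= b -> a <= clamp a b x <= b.
Proof. intros. unfold clamp, Rmax, Rmin. repeat destruct Rle_dec; lra. Qed.

Lemma clamp_id a b x : a <= x <= b -> clamp a b x = x.
Proof. intros. unfold clamp, Rmax, Rmin. repeat destruct Rle_dec; lra. Qed.

Lemma Rabs_clamp_le a b x y : a <= b -> Rabs (clamp a b x - clamp a b y) <= Rabs (x - y).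
Proof.
  intros. unfold clamp, Rmax, Rmin, Rabs.
  repeat destruct Rle_dec; repeat destruct Rcase_abs; lra.
Qed.

Lemma deriv_on_cont_on a b g g' : deriv_on a b g g' -> cont_on a b g.
Proof.
  intros Hg x hx e he.
  destruct (Hg x hx 1 Rlt_0_1) as [d [hd Hd]].
  set (m := Rabs (g' x) + 1).
  assert (hm : 0 < m) by (unfold m; pose proof (Rabs_pos (g' x)); lra).
  exists (Rmin d (e / m)). split; [apply Rmin_pos; [| apply Rdiv_lt_0_compat]; lra|].
  intros z hz hzx.
  destruct (Req_dec z x) as [->|hne]; [now rewrite Rminus_diag, Rabs_R0|].
  assert (hzx1 : Rabs (z - x) < d) by (eapply Rlt_le_trans; [exact hzx | apply Rmin_l]).
  assert (hzx2 : Rabs (z - x) * m < e).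
  { apply (Rmult_lt_compat_r m) in hzx; [|exact hm].
    pose proof (Rmin_r d (e / m)).
    replace e with (e / m * m) by (field; lra). nra. }
  specialize (Hd (z - x) ltac:(lra) hzx1 ltac:(replace (x + (z - x)) with z by ring; lra)).
  replace (x + (z - x)) with z in Hd by ring.
  (* the difference quotient is within 1 of [g' x], hence bounded by [m] *)
  replace (g z - g x) with ((g z - g x) / (z - x) * (z - x)) by (field; lra).
  rewrite Rabs_mult.
  assert (Rabs ((g z - g x) / (z - x)) <= m).
  { unfold m. pose proof (Rabs_triang_inv ((g z - g x) / (z - x)) (g' x)). lra. }
  pose proof (Rabs_pos (z - x)). nra.
Qed.

Lemma continuity_pt_clamp a b g x : a <= b -> cont_on a b g ->
  continuity_pt (fun s => g (clamp a b s)) x.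
Proof.
  intros hab Hg e he. simpl. unfold R_dist.
  destruct (Hg (clamp a b x) (clamp_in a b x hab) e he) as [d [hd Hd]].
  exists d. split; [exact hd|]. intros z [_ hz]. apply Hd; [now apply clamp_in|].
  eapply Rle_lt_trans; [apply Rabs_clamp_le|]; assumption.
Qed.

Lemma is_derive_clamp a b g g' x : deriv_on a b g g' -> a < x < b ->
  is_derive (fun s => g (clamp a b s)) x (g' x).
Proof.
  intros Hg hx. apply is_derive_Reals. intros e he.
  destruct (Hg x ltac:(lra) e he) as [d [hd Hd]].
  assert (hr : 0 < Rmin d (Rmin (x - a) (b - x))) by (repeat apply Rmin_pos; lra).
  exists (mkposreal _ hr). simpl. intros h hh hlt.
  pose proof (Rmin_l d (Rmin (x - a) (b - x))) as hd1.
  pose proof (Rmin_r d (Rmin (x - a) (b - x))) as hd2.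
  pose proof (Rmin_l (x - a) (b - x)). pose proof (Rmin_r (x - a) (b - x)).
  assert (a <= x + h <= b) by (revert hlt; unfold Rabs; destruct Rcase_abs; lra).
  rewrite (clamp_id a b (x + h)), (clamp_id a b x) by lra. apply Hd; lra.
Qed.

Lemma deriv_on_is_derive a b g g' : (forall x, a <= x <= b -> is_derive g x (g' x)) ->
  deriv_on a b g g'.
Proof.
  intros Hg x hx e he. destruct (proj1 (is_derive_Reals _ _ _) (Hg x hx) e he) as [d Hd].
  exists d. split; [apply cond_pos|]. intros h hh hlt _. now apply Hd.
Qed.

Lemma deriv_on_scal a b c g g' : deriv_on a b g g' ->
  deriv_on a b (fun x => c * g x) (fun x => c * g' x).
Proof.
  intros Hg x hx e he.
  destruct (Req_dec c 0) as [->|hc].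
  { exists 1. split; [lra|]. intros. rewrite !Rmult_0_l, Rminus_diag, Rdiv_0_l, Rminus_diag, Rabs_R0. lra. }
  assert (hc' : 0 < Rabs c) by now apply Rabs_pos_lt.
  destruct (Hg x hx (e / Rabs c) ltac:(now apply Rdiv_lt_0_compat)) as [d [hd Hd]].
  exists d. split; [exact hd|]. intros h hh hlt hxh.
  replace ((c * g (x + h) - c * g x) / h - c * g' x) with (c * ((g (x + h) - g x) / h - g' x))
    by (field; exact hh).
  rewrite Rabs_mult. specialize (Hd h hh hlt hxh).
  apply (Rmult_lt_compat_l (Rabs c)) in Hd; [|exact hc'].
  now replace (Rabs c * (e / Rabs c)) with e in Hd by (field; lra).
Qed.

Lemma cont_on_bounded a b g : a <= b -> cont_on a b g ->
  exists M, forall x, a <= x <= b -> Rabs (g x) <= M.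
Proof.
  intros hab Hg.
  destruct (continuity_ab_maj (fun s => Rabs (g (clamp a b s))) a b hab) as [xm [Hxm _]].
  { intros c _. apply (continuity_pt_comp (fun s => g (clamp a b s)) Rabs).
    - now apply continuity_pt_clamp.
    - apply Rcontinuity_abs. }
  exists (Rabs (g (clamp a b xm))). intros x hx.
  specialize (Hxm x hx). now rewrite clamp_id in Hxm.
Qed.

Lemma MVT_abs_le (G G' : R -> R) x y M : x <= y ->
  (forall c, x <= c <= y -> continuity_pt G c) ->
  (forall c, x < c < y -> is_derive G c (G' c) /\ Rabs (G' c) <= M) ->
  Rabs (G y - G x) <= M * (y - x).
Proof.
  intros hxy Hc Hd.
  destruct (Req_dec x y) as [<-|hne]; [rewrite !Rminus_diag, Rabs_R0; lra|].
  pose (dG := fun c (hc : x < c < y) =>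
    exist (derivable_pt_lim G c) (G' c) (proj1 (is_derive_Reals _ _ _) (proj1 (Hd c hc)))).
  destruct (MVT G id x y dG (fun c _ => derivable_pt_id c) ltac:(lra) Hc
     (fun c _ => derivable_continuous_pt _ _ (derivable_pt_id c))) as [c [hc E]].
  rewrite derive_pt_id in E. simpl in E. unfold id in E.
  replace (G y - G x) with (G' c * (y - x)) by lra.
  rewrite Rabs_mult, (Rabs_right (y - x)) by lra.
  apply Rmult_le_compat_r; [lra | apply (Hd c hc)].
Qed.

Definition phase_energy (Z Z1 : R -> R) (c s0 s : R) : R :=
  Z1 s * cos (c * (s - s0)) + c * Z s * sin (c * (s - s0)).

Lemma is_derive_phase_energy (Z Z1 Z2 : R -> R) c s0 s :
  is_derive Z s (Z1 s) -> is_derive Z1 s (Z2 s) ->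
  is_derive (phase_energy Z Z1 c s0) s ((Z2 s + c ^ 2 * Z s) * cos (c * (s - s0))).
Proof.
  intros HZ HZ1. unfold phase_energy. auto_derive.
  - repeat split; [exists (Z2 s) | exists (Z1 s)]; assumption.
  - rewrite (is_derive_unique _ _ _ HZ : Derive (fun x : R => Z x) s = _).
    rewrite (is_derive_unique _ _ _ HZ1 : Derive (fun x : R => Z1 x) s = _).
    unfold Rminus. ring.
Qed.

Lemma phase_energy_decomposition (Z Z1 : R -> R) a b w t :
  w * Z t * sin (w * (b - a)) =
  cos (w * (b - t)) * phase_energy Z Z1 w a t - cos (w * (t - a)) * phase_energy Z Z1 (- w) b t.
Proof.
  unfold phase_energy.
  replace (- w * (t - b)) with (w * (b - t)) by ring.
  replace (w * (b - a)) with (w * (t - a) + w * (b - t)) by ring.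
  rewrite sin_plus. ring.
Qed.

Section Oscillation.

Variables (a b w M : R) (Z Z1 Z2 : R -> R).
Hypotheses (Zc : forall s, a <= s <= b -> continuity_pt Z s)
  (Z1c : forall s, a <= s <= b -> continuity_pt Z1 s)
  (ZD : forall s, a < s < b -> is_derive Z s (Z1 s))
  (Z1D : forall s, a < s < b -> is_derive Z1 s (Z2 s))
  (HM : forall s, a < s < b -> Rabs (Z2 s + w ^ 2 * Z s) <= M).

Lemma phase_energy_drift c s0 t : c ^ 2 = w ^ 2 -> a <= s0 <= b -> a <= t <= b ->
  Rabs (phase_energy Z Z1 c s0 t - Z1 s0) <= M * Rabs (t - s0).
Proof.
  intros hc hs0 ht.
  assert (E0 : phase_energy Z Z1 c s0 s0 = Z1 s0).
  { unfold phase_energy. rewrite Rminus_diag, Rmult_0_r, cos_0, sin_0. ring. }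
  assert (Hdrift : forall x y, a <= x <= y -> y <= b ->
    Rabs (phase_energy Z Z1 c s0 y - phase_energy Z Z1 c s0 x) <= M * (y - x)).
  { intros x y hx hy.
    apply (MVT_abs_le _ (fun s => (Z2 s + w ^ 2 * Z s) * cos (c * (s - s0)))); [lra| |].
    - intros s hs. apply continuity_pt_plus; apply continuity_pt_mult.
      + apply Z1c; lra.
      + apply derivable_continuous_pt, ex_derive_Reals_0; auto_derive; easy.
      + apply continuity_pt_scal, Zc; lra.
      + apply derivable_continuous_pt, ex_derive_Reals_0; auto_derive; easy.
    - intros s hs. rewrite <- hc. split; [apply is_derive_phase_energy; [apply ZD | apply Z1D]; lra|].
      rewrite hc, Rabs_mult. pose proof (COS_bound (c * (s - s0))).
      assert (Rabs (cos (c * (s - s0))) <= 1) by (apply Rabs_le; lra).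
      pose proof (Rabs_pos (Z2 s + w ^ 2 * Z s)). pose proof (HM s ltac:(lra)). nra. }
  rewrite <- E0.
  destruct (Rle_dec s0 t).
  - rewrite (Rabs_right (t - s0)) by lra. apply Hdrift; lra.
  - rewrite Rabs_minus_sym, (Rabs_left (t - s0)) by lra.
    replace (- (t - s0)) with (s0 - t) by ring. apply Hdrift; lra.
Qed.

Lemma oscillation_bound t : a <= t <= b ->
  Rabs (w * Z t * sin (w * (b - a))) <= Rabs (Z1 a) + Rabs (Z1 b) + M * (b - a).
Proof.
  intros ht. rewrite (phase_energy_decomposition Z Z1 a b w t).
  pose proof (phase_energy_drift w a t eq_refl ltac:(lra) ht) as Ha.
  pose proof (phase_energy_drift (- w) b t ltac:(ring) ltac:(lra) ht) as Hb.
  rewrite (Rabs_right (t - a)) in Ha by lra.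
  rewrite (Rabs_left1 (t - b)) in Hb by lra.
  pose proof (Rabs_triang_inv (phase_energy Z Z1 w a t) (Z1 a)).
  pose proof (Rabs_triang_inv (phase_energy Z Z1 (- w) b t) (Z1 b)).
  pose proof (COS_bound (w * (b - t))). pose proof (COS_bound (w * (t - a))).
  eapply Rle_trans; [apply Rabs_triang|]. rewrite Rabs_Ropp, !Rabs_mult.
  assert (Rabs (cos (w * (b - t))) <= 1) by (apply Rabs_le; lra).
  assert (Rabs (cos (w * (t - a))) <= 1) by (apply Rabs_le; lra).
  pose proof (Rabs_pos (phase_energy Z Z1 w a t)). pose proof (Rabs_pos (phase_energy Z Z1 (- w) b t)).
  nra.
Qed.

End Oscillation.

Lemma neumann_sol_deviation a b eps k f y g g1 g2 M :
  a < b -> 0 < eps -> 0 < k -> neumann_sol a b eps k f y ->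
  deriv_on a b g g1 -> deriv_on a b g1 g2 ->
  (forall s, a < s < b -> Rabs (f s - k * g s - eps * g2 s) <= eps * M) ->
  forall t, a <= t <= b ->
  sqrt (k / eps) * Rabs (y t - g t) * Rabs (sin (sqrt (k / eps) * (b - a))) <=
  Rabs (g1 a) + Rabs (g1 b) + M * (b - a).
Proof.
  intros hab he hk [y1 [y2 [Y [Y1 [Yeq [Ya Yb]]]]]] G G1 Hres t ht.
  set (w := sqrt (k / eps)).
  assert (hw : 0 < w) by (apply sqrt_lt_R0, Rdiv_lt_0_compat; assumption).
  assert (hw2 : w ^ 2 = k / eps) by (apply pow2_sqrt, Rlt_le, Rdiv_lt_0_compat; assumption).
  pose (cl := clamp a b).
  assert (Hc : forall (h h' : R -> R) s, deriv_on a b h h' -> continuity_pt (fun x => h (cl x)) s)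
    by (intros; apply continuity_pt_clamp; [lra | eapply deriv_on_cont_on; eassumption]).
  set (Z := fun s => y (cl s) - g (cl s)).
  set (Z1 := fun s => y1 (cl s) - g1 (cl s)).
  set (Z2 := fun s => y2 (cl s) - g2 (cl s)).
  assert (HZ : forall s, a <= s <= b -> continuity_pt Z s /\ continuity_pt Z1 s)
    by (intros; split; apply continuity_pt_minus; eapply Hc; eassumption).
  assert (HZD : forall s, a < s < b -> is_derive Z s (Z1 s) /\ is_derive Z1 s (Z2 s)).
  { intros s hs. unfold Z, Z1, Z2, cl. rewrite !(clamp_id a b s) by lra.
    split.
    - apply (is_derive_minus (fun x => y (clamp a b x)) (fun x => g (clamp a b x)));
        eapply is_derive_clamp; eassumption.
    - apply (is_derive_minus (fun x => y1 (clamp a b x)) (fun x => g1 (clamp a b x)));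
        eapply is_derive_clamp; eassumption. }
  assert (HZM : forall s, a < s < b -> Rabs (Z2 s + w ^ 2 * Z s) <= M).
  { intros s hs. unfold Z, Z2, cl. rewrite clamp_id, hw2 by lra.
    replace (y2 s - g2 s + k / eps * (y s - g s)) with
      ((f s - k * g s - eps * g2 s) / eps) by (rewrite <- (Yeq s) by lra; field; lra).
    unfold Rdiv. rewrite Rabs_mult, (Rabs_right (/ eps)) by (apply Rle_ge, Rlt_le, Rinv_0_lt_compat; lra).
    apply (Rmult_le_reg_r eps); [lra|].
    rewrite Rmult_assoc, Rinv_l, Rmult_1_r by lra. rewrite (Rmult_comm M). apply Hres; lra. }
  pose proof (oscillation_bound a b w M Z Z1 Z2 (fun s hs => proj1 (HZ s hs)) (fun s hs => proj2 (HZ s hs))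
    (fun s hs => proj1 (HZD s hs)) (fun s hs => proj2 (HZD s hs)) HZM t ht) as Hosc.
  unfold Z, Z1, cl in Hosc. rewrite !(clamp_id a b t), !(clamp_id a b a), !(clamp_id a b b) in Hosc by lra.
  rewrite Ya, Yb, !Rminus_0_l, !Rabs_Ropp in Hosc.
  rewrite <- (Rabs_right w) at 1 by lra. now rewrite <- !Rabs_mult.
Qed.

Lemma neumann_sol_unique a b eps k f y z :
  a < b -> 0 < eps -> 0 < k -> sin (sqrt (k / eps) * (b - a)) <> 0 ->
  neumann_sol a b eps k f y -> neumann_sol a b eps k f z ->
  forall t, a <= t <= b -> y t = z t.
Proof.
  intros hab he hk hs Hy Hz t ht.
  destruct Hz as [z1 [z2 [Z [Z1 [Zeq [Za Zb]]]]]].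
  assert (Hres : forall s, a < s < b -> Rabs (f s - k * z s - eps * z2 s) <= eps * 0).
  { intros s hs'. rewrite <- (Zeq s) by lra. replace (_ - _) with 0 by ring.
    rewrite Rabs_R0. lra. }
  pose proof (neumann_sol_deviation a b eps k f y z z1 z2 0 hab he hk Hy Z Z1 Hres t ht) as H.
  rewrite Za, Zb, Rabs_R0, Rmult_0_l, !Rplus_0_r in H.
  assert (hw : 0 < sqrt (k / eps) * Rabs (sin (sqrt (k / eps) * (b - a)))).
  { apply Rmult_lt_0_compat; [apply sqrt_lt_R0, Rdiv_lt_0_compat | apply Rabs_pos_lt]; assumption. }
  pose proof (Rabs_pos (y t - z t)).
  apply Rminus_diag_uniq, Rabs_eq_0. nra.
Qed.

Lemma neumann_sol_reduced_error a b eps k f f1 f2 M2 y :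
  a < b -> 0 < eps -> 0 < k -> deriv_on a b f f1 -> deriv_on a b f1 f2 ->
  (forall s, a <= s <= b -> Rabs (f2 s) <= M2) -> neumann_sol a b eps k f y ->
  forall t, a <= t <= b ->
  sqrt (k / eps) * Rabs (y t - f t / k) * Rabs (sin (sqrt (k / eps) * (b - a))) <=
  (Rabs (f1 a) + Rabs (f1 b) + M2 * (b - a)) / k.
Proof.
  intros hab he hk F F1 HM2 Hy t ht.
  assert (hk' : 0 < / k) by now apply Rinv_0_lt_compat.
  assert (Hres : forall s, a < s < b ->
    Rabs (f s - k * (/ k * f s) - eps * (/ k * f2 s)) <= eps * (M2 / k)).
  { intros s hs. replace (f s - k * (/ k * f s) - eps * (/ k * f2 s)) with (- (eps / k) * f2 s)
      by (field; lra).
    rewrite Rabs_mult, Rabs_Ropp, Rabs_right by (apply Rle_ge, Rlt_le, Rdiv_lt_0_compat; lra).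
    replace (eps * (M2 / k)) with (eps / k * M2) by (field; lra).
    apply Rmult_le_compat_l; [apply Rlt_le, Rdiv_lt_0_compat; lra | apply HM2; lra]. }
  pose proof (neumann_sol_deviation a b eps k f y _ _ _ (M2 / k) hab he hk Hy
    (deriv_on_scal a b (/ k) f f1 F) (deriv_on_scal a b (/ k) f1 f2 F1) Hres t ht) as H.
  cbv beta in H. rewrite !Rabs_mult, (Rabs_right (/ k)) in H by lra.
  unfold Rdiv. rewrite (Rmult_comm (f t)). eapply Rle_trans; [exact H | right; field; lra].
Qed.

Lemma is_derive_RInt_upper (g : R -> R) a x : (forall s, continuity_pt g s) ->
  is_derive (fun t => RInt g a t) x (g x).
Proof.
  intros Hg. apply (is_derive_RInt g _ a).
  - apply filter_forall. intro t. apply (@RInt_correct R_CompleteNormedModule).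
    apply (@ex_RInt_continuous R_CompleteNormedModule).
    intros s _. apply continuity_pt_filterlim, Hg.
  - apply continuity_pt_filterlim, Hg.
Qed.

Section VariationOfConstants.

Variables (a w B : R) (F : R -> R).
Hypotheses (hw : w <> 0) (HF : forall s, continuity_pt F s).

Definition vc_cos_int (t : R) : R := RInt (fun s => cos (w * (s - a)) * F s) a t.
Definition vc_sin_int (t : R) : R := RInt (fun s => sin (w * (s - a)) * F s) a t.

(* Variation of constants for [y'' + w^2 y = F], with free constant [B]
   and the constant of the sine mode fixed so that [y'(a) = 0]. *)
Definition vc_sol (t : R) : R :=
  (sin (w * (t - a)) * vc_cos_int t + cos (w * (t - a)) * (B - vc_sin_int t)) / w.
Definition vc_sol' (t : R) : R :=
  cos (w * (t - a)) * vc_cos_int t - sin (w * (t - a)) * (B - vc_sin_int t).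

Lemma is_derive_vc_cos_int x : is_derive vc_cos_int x (cos (w * (x - a)) * F x).
Proof.
  apply (is_derive_RInt_upper (fun s => cos (w * (s - a)) * F s)). intros s.
  apply continuity_pt_mult; [apply derivable_continuous_pt, ex_derive_Reals_0; auto_derive|]; easy.
Qed.

Lemma is_derive_vc_sin_int x : is_derive vc_sin_int x (sin (w * (x - a)) * F x).
Proof.
  apply (is_derive_RInt_upper (fun s => sin (w * (s - a)) * F s)). intros s.
  apply continuity_pt_mult; [apply derivable_continuous_pt, ex_derive_Reals_0; auto_derive|]; easy.
Qed.

Lemma is_derive_vc_sol x : is_derive vc_sol x (vc_sol' x).
Proof.
  pose proof (is_derive_vc_cos_int x) as D1. pose proof (is_derive_vc_sin_int x) as D2.
  unfold vc_sol, vc_sol'. auto_derive.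
  - repeat split; [exists (cos (w * (x - a)) * F x) | exists (sin (w * (x - a)) * F x)]; assumption.
  - rewrite (is_derive_unique _ _ _ D1 : Derive (fun t : R => vc_cos_int t) x = _).
    rewrite (is_derive_unique _ _ _ D2 : Derive (fun t : R => vc_sin_int t) x = _).
    unfold Rminus. field. exact hw.
Qed.

Lemma is_derive_vc_sol' x : is_derive vc_sol' x (F x - w ^ 2 * vc_sol x).
Proof.
  pose proof (is_derive_vc_cos_int x) as D1. pose proof (is_derive_vc_sin_int x) as D2.
  unfold vc_sol, vc_sol'. auto_derive.
  - repeat split; [exists (cos (w * (x - a)) * F x) | exists (sin (w * (x - a)) * F x)]; assumption.
  - rewrite (is_derive_unique _ _ _ D1 : Derive (fun t : R => vc_cos_int t) x = _).
    rewrite (is_derive_unique _ _ _ D2 : Derive (fun t : R => vc_sin_int t) x = _).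
    pose proof (sin2_cos2 (w * (x - a))) as S. unfold Rsqr in S.
    unfold Rminus in *. set (th := w * (x + - a)) in *.
    transitivity (F x * (sin th * sin th + cos th * cos th)
      - w * (sin th * vc_cos_int x + cos th * (B + - vc_sin_int x))); [ring|].
    rewrite S. field. exact hw.
Qed.

Lemma vc_sol'_start : vc_sol' a = 0.
Proof.
  unfold vc_sol', vc_cos_int. rewrite Rminus_diag, Rmult_0_r, cos_0, sin_0, RInt_point.
  simpl. unfold zero. simpl. ring.
Qed.

End VariationOfConstants.

Lemma neumann_sol_exists a b eps k f : a < b -> 0 < eps -> 0 < k -> cont_on a b f ->
  sin (sqrt (k / eps) * (b - a)) <> 0 -> exists y, neumann_sol a b eps k f y.
Proof.
  intros hab he hk Hf hs.
  set (w := sqrt (k / eps)) in *.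
  assert (hw : w <> 0) by (apply Rgt_not_eq, sqrt_lt_R0, Rdiv_lt_0_compat; assumption).
  assert (hw2 : w ^ 2 = k / eps) by (apply pow2_sqrt, Rlt_le, Rdiv_lt_0_compat; assumption).
  set (F := fun s => / eps * f (clamp a b s)).
  assert (HF : forall s, continuity_pt F s)
    by (intros s; apply continuity_pt_scal, continuity_pt_clamp; [lra | exact Hf]).
  (* [B] is chosen so that the solution also satisfies [y'(b) = 0] *)
  set (B := vc_sin_int a w F b + cos (w * (b - a)) * vc_cos_int a w F b / sin (w * (b - a))).
  exists (vc_sol a w B F), (vc_sol' a w B F), (fun t => F t - w ^ 2 * vc_sol a w B F t).
  split; [|split; [|split; [|split]]].
  - apply deriv_on_is_derive. intros x _. now apply is_derive_vc_sol.
  - apply deriv_on_is_derive. intros x _. now apply is_derive_vc_sol'.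
  - intros t ht. unfold F. rewrite clamp_id, hw2 by assumption. field. lra.
  - apply vc_sol'_start.
  - unfold vc_sol', B. field. exact hs.
Qed.

Lemma Rabs_sin_ge lam n x : 0 < lam <= PI / 2 ->
  INR n * PI + lam <= x <= (INR n + 1) * PI - lam -> sin lam <= Rabs (sin x).
Proof.
  intros hlam hx. pose proof PI_RGT_0.
  assert (Hshift : forall m y, Rabs (sin (y + INR m * PI)) = Rabs (sin y)).
  { induction m as [|m IH]; intros y.
    - now rewrite Rmult_0_l, Rplus_0_r.
    - rewrite S_INR. replace (y + (INR m + 1) * PI) with (y + INR m * PI + PI) by ring.
      now rewrite neg_sin, Rabs_Ropp. }
  replace x with ((x - INR n * PI) + INR n * PI) by ring.
  rewrite Hshift, Rabs_right.
  - destruct (Rle_dec (x - INR n * PI) (PI / 2)).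
    + apply sin_incr_1; lra.
    + rewrite <- (sin_PI_x (x - INR n * PI)). apply sin_incr_1; lra.
  - apply Rle_ge, sin_ge_0; lra.
Qed.

Section IntervalJ.

Variables (a b k lam eps : R) (n : nat).
Hypotheses (hab : a < b) (hk : 0 < k) (hlam : 0 < lam <= PI / 2) (hJ : in_J a b k lam n eps).

Lemma in_J_denominators : 0 < INR n * PI + lam <= (INR n + 1) * PI - lam.
Proof. pose proof PI_RGT_0. pose proof (pos_INR n). split; nra. Qed.

Lemma in_J_pos : 0 < eps.
Proof.
  destruct hJ as [hJ1 _]. pose proof in_J_denominators.
  eapply Rlt_le_trans; [|exact hJ1].
  apply Rmult_lt_0_compat; [exact hk | apply pow_lt, Rdiv_lt_0_compat; lra].
Qed.

Lemma in_J_phase :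
  INR n * PI + lam <= sqrt (k / eps) * (b - a) <= (INR n + 1) * PI - lam.
Proof.
  destruct hJ as [hJ1 hJ2]. pose proof in_J_pos as he. pose proof in_J_denominators.
  set (p := INR n * PI + lam) in *. set (q := (INR n + 1) * PI - lam) in *.
  set (X := sqrt (k / eps) * (b - a)).
  assert (hX : 0 < X) by (apply Rmult_lt_0_compat; [apply sqrt_lt_R0, Rdiv_lt_0_compat|]; lra).
  (* [eps X^2 = k (b-a)^2] turns the two bounds of [J_n] into [p^2 <= X^2 <= q^2] *)
  assert (HX : eps * X ^ 2 = k * (b - a) ^ 2).
  { unfold X. rewrite Rpow_mult_distr, pow2_sqrt by (apply Rlt_le, Rdiv_lt_0_compat; lra).
    field. lra. }
  assert (Hp : eps * p ^ 2 <= k * (b - a) ^ 2).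
  { replace (k * (b - a) ^ 2) with (k * ((b - a) / p) ^ 2 * p ^ 2) by (field; lra).
    apply Rmult_le_compat_r; [apply pow2_ge_0 | exact hJ2]. }
  assert (Hq : k * (b - a) ^ 2 <= eps * q ^ 2).
  { replace (k * (b - a) ^ 2) with (k * ((b - a) / q) ^ 2 * q ^ 2) by (field; lra).
    apply Rmult_le_compat_r; [apply pow2_ge_0 | exact hJ1]. }
  split; apply Rsqr_incr_0_var; unfold Rsqr; nra.
Qed.

Lemma in_J_sqrt_le : sqrt eps <= sqrt k * (b - a) / (INR n * PI + lam).
Proof.
  pose proof in_J_pos as he. pose proof in_J_denominators as hd. pose proof (proj1 in_J_phase) as hph.
  assert (hse : 0 < sqrt eps) by now apply sqrt_lt_R0.
  rewrite sqrt_div_alt in hph by exact he.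
  apply (Rmult_le_reg_r (INR n * PI + lam)); [lra|].
  unfold Rdiv. rewrite Rmult_assoc, Rinv_l, Rmult_1_r by lra.
  apply (Rmult_le_compat_l (sqrt eps)) in hph; [|lra].
  replace (sqrt eps * (sqrt k / sqrt eps * (b - a))) with (sqrt k * (b - a)) in hph by (field; lra).
  lra.
Qed.

Lemma in_J_sin_lower : sin lam <= Rabs (sin (sqrt (k / eps) * (b - a))).
Proof. exact (Rabs_sin_ge lam n _ hlam in_J_phase). Qed.

Lemma in_J_sin_neq0 : sin (sqrt (k / eps) * (b - a)) <> 0.
Proof.
  pose proof in_J_sin_lower. assert (0 < sin lam) by (apply sin_gt_0; pose proof PI_RGT_0; lra).
  intros E. rewrite E, Rabs_R0 in *. lra.
Qed.

End IntervalJ.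

Lemma neumann_sol_error_in_J a b k lam n eps f f1 f2 M2 y :
  a < b -> 0 < k -> 0 < lam <= PI / 2 -> in_J a b k lam n eps ->
  deriv_on a b f f1 -> deriv_on a b f1 f2 -> (forall s, a <= s <= b -> Rabs (f2 s) <= M2) ->
  neumann_sol a b eps k f y ->
  forall t, a <= t <= b ->
  Rabs (y t - f t / k) <=
  (Rabs (f1 a) + Rabs (f1 b) + M2 * (b - a)) / (k * sqrt k * sin lam) * sqrt eps.
Proof.
  intros hab hk hlam hJ F F1 HM2 Hy t ht.
  pose proof (in_J_pos a b k lam eps n hab hk hlam hJ) as he.
  pose proof (neumann_sol_reduced_error a b eps k f f1 f2 M2 y hab he hk F F1 HM2 Hy t ht) as H.
  pose proof (in_J_sin_lower a b k lam eps n hab hk hlam hJ) as Hs.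
  set (K := Rabs (f1 a) + Rabs (f1 b) + M2 * (b - a)) in *.
  set (d := Rabs (y t - f t / k)) in *.
  assert (hd : 0 <= d) by apply Rabs_pos.
  assert (hsl : 0 < sin lam) by (apply sin_gt_0; pose proof PI_RGT_0; lra).
  assert (hsk : 0 < sqrt k) by now apply sqrt_lt_R0.
  assert (hse : 0 < sqrt eps) by now apply sqrt_lt_R0.
  rewrite sqrt_div_alt in H, Hs by exact he.
  assert (Hd : sqrt k * sin lam * d <= K / k * sqrt eps).
  { apply (Rmult_le_reg_r (/ sqrt eps)); [now apply Rinv_0_lt_compat|].
    replace (K / k * sqrt eps * / sqrt eps) with (K / k) by (field; lra).
    eapply Rle_trans; [|exact H].
    replace (sqrt k * sin lam * d * / sqrt eps) with (sqrt k / sqrt eps * d * sin lam) by (field; lra).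
    apply Rmult_le_compat_l; [|exact Hs].
    apply Rmult_le_pos; [apply Rlt_le, Rdiv_lt_0_compat|]; assumption. }
  apply (Rmult_le_reg_l (sqrt k * sin lam)); [now apply Rmult_lt_0_compat|].
  eapply Rle_trans; [exact Hd | right; field; lra].
Qed.

Lemma eventually_div_lt A e lam : 0 < e -> 0 < lam ->
  exists N, forall n, (N <= n)%nat -> A / (INR n * PI + lam) < e.
Proof.
  intros he hlam. pose proof PI_RGT_0.
  destruct (INR_unbounded (A / (e * PI))) as [N HN]. exists N. intros n hn.
  apply le_INR in hn.
  assert (hp : 0 < INR n * PI + lam) by (pose proof (pos_INR n); nra).
  apply (Rmult_lt_reg_r (INR n * PI + lam)); [exact hp|].
  unfold Rdiv. rewrite Rmult_assoc, Rinv_l, Rmult_1_r by lra.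
  assert (A < e * PI * INR n).
  { apply (Rmult_lt_reg_r (/ (e * PI))); [apply Rinv_0_lt_compat; nra|].
    replace (e * PI * INR n * / (e * PI)) with (INR n) by (field; lra). lra. }
  nra.
Qed.

Lemma in_J_scaled_sqrt_eventually_lt a b k lam (epsn : nat -> R) C e :
  a < b -> 0 < k -> 0 < lam <= PI / 2 -> (forall n, in_J a b k lam n (epsn n)) -> 0 < e ->
  exists N, forall n, (N <= n)%nat -> C * sqrt (epsn n) < e.
Proof.
  intros hab hk hlam HJ he.
  destruct (Rle_dec C 0) as [hC|hC].
  { exists 0%nat. intros n _. pose proof (sqrt_pos (epsn n)). nra. }
  destruct (eventually_div_lt (C * (sqrt k * (b - a))) e lam he (proj1 hlam)) as [N HN].
  exists N. intros n hn. eapply Rle_lt_trans; [|exact (HN n hn)].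
  unfold Rdiv. rewrite Rmult_assoc. apply Rmult_le_compat_l; [lra|].
  exact (in_J_sqrt_le _ _ _ _ _ _ hab hk hlam (HJ n)).
Qed.

Theorem theorem1 (a b k lam : R) (f : R -> R)
  (hab : a < b) (hk : 0 < k) (hlam : 0 < lam <= PI / 2)
  (hf : C3_on a b f) :
  exists C : R,
  forall epsn : nat -> R, (forall n, in_J a b k lam n (epsn n)) ->
    (forall n,
       (exists y, neumann_sol a b (epsn n) k f y) /\
       (forall y z, neumann_sol a b (epsn n) k f y ->
                    neumann_sol a b (epsn n) k f z ->
                    forall t, a <= t <= b -> y t = z t) /\
       (forall y, neumann_sol a b (epsn n) k f y ->
          forall t, a <= t <= b -> Rabs (y t - f t / k) <= C * sqrt (epsn n)))
    /\
    (forall ys : nat -> R -> R,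
       (forall n, neumann_sol a b (epsn n) k f (ys n)) ->
       forall e, 0 < e -> exists N, forall n, (N <= n)%nat ->
         forall t, a <= t <= b -> Rabs (ys n t - f t / k) < e).
Proof.
  destruct hf as [f1 [f2 [f3 [F [F1 [F2 _]]]]]].
  destruct (cont_on_bounded a b f2 ltac:(lra) (deriv_on_cont_on _ _ _ _ F2)) as [M2 HM2].
  set (C := (Rabs (f1 a) + Rabs (f1 b) + M2 * (b - a)) / (k * sqrt k * sin lam)).
  exists C. intros epsn HJ.
  assert (Herr : forall n y, neumann_sol a b (epsn n) k f y ->
      forall t, a <= t <= b -> Rabs (y t - f t / k) <= C * sqrt (epsn n))
    by (intros n y; exact (neumann_sol_error_in_J _ _ _ _ _ _ _ _ _ _ _ hab hk hlam (HJ n) F F1 HM2)).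
  split.
  - intros n.
    pose proof (in_J_pos _ _ _ _ _ _ hab hk hlam (HJ n)) as he.
    pose proof (in_J_sin_neq0 _ _ _ _ _ _ hab hk hlam (HJ n)) as hs.
    split; [|split; [|exact (Herr n)]].
    + apply neumann_sol_exists; [assumption .. | eapply deriv_on_cont_on; eassumption | exact hs].
    + intros y z. now apply neumann_sol_unique.
  - intros ys Hys e he.
    destruct (in_J_scaled_sqrt_eventually_lt a b k lam epsn C e hab hk hlam HJ he) as [N HN].
    exists N. intros n hn t ht.
    exact (Rle_lt_trans _ _ _ (Herr n (ys n) (Hys n) t ht) (HN n hn)).
Qed.
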